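(* Let $(\mathcal{Y},\eta)$ be an $(n,m)$-voltage operator and let $\tau\in\operatorname{Aut}(\mathcal{Y})$ be such that there exists a group homomorphism $\tau^\#:\mathcal{C}^n\to\mathcal{C}^n$ with $\tau^\#(\eta(W))=\eta(W\tau)$ for every $W\in\Pi(\mathcal{Y})$. Then for every $n$-premaniplex $\mathcal{X}$, the premaniplex $\mathcal{X}^{\tau^\#}\rtimes_\eta\mathcal{Y}$ is isomorphic to $\mathcal{X}\rtimes_\eta\mathcal{Y}$.
   Context: An $n$-premaniplex is an edge-coloured graph (semi-edges and parallel edges allowed) with colours $\{0,\dots,n-1\}$ such that every vertex (flag) is the start of exactly one dart of each colour, and for $|i-j|\ge2$ alternating $i,j$-paths of length 4 are closed; $x^i$ is the $i$-adjacent flag of $x$. $\mathcal{C}^n=\langle r_0,\dots,r_{n-1}\mid r_i^2,\ (r_ir_j)^2\ (|i-j|\ge2)\rangle$ acts on the left on flags by $r_ix=x^i$. Isomorphisms are bijections on flags preserving $i$-adjacency for all $i$; automorphisms act on the right and map paths to paths, $W\mapsto W\tau$. For a flag $y$ of an $m$-premaniplex $\mathcal{Y}$ and $\omega\in\mathcal{C}^m$, $W_\omega(y)$ is the homotopy class of paths from $y$ whose colour sequence $i_1,\dots,i_k$ satisfies $r_{i_k}\cdots r_{i_1}=\omega$; these form the fundamental groupoid $\Pi(\mathcal{Y})$. A voltage assignment $\eta:\Pi(\mathcal{Y})\to\mathcal{C}^n$ satisfies $\eta(W_1W_2)=\eta(W_2)\eta(W_1)$; $(\mathcal{Y},\eta)$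 is an $(n,m)$-voltage operator. $\mathcal{X}\rtimes_\eta\mathcal{Y}$ has flags $\mathcal{X}\times\mathcal{Y}$ and $(x,y)^i=(\eta(W_{r_i}(y))x,r_iy)$, $i\in\{0,\dots,m-1\}$. Given a homomorphism $\tau^\#:\mathcal{C}^n\to\mathcal{C}^n$, $\mathcal{X}^{\tau^\#}$ is the $n$-premaniplex with the same flags as $\mathcal{X}$ in which the $i$-adjacent flag of $x$ is $\tau^\#(r_i)x$ (computed in $\mathcal{X}$). *)

From mathcomp Require Import all_boot.
Set Implicit Arguments. Unset Strict Implicit. Unset Printing Implicit Defensive.

(* A word [:: i1; ...; ik] (colours in the order they are traversed along  *)
(* a path, i.e. in the order the generators are applied) represents the    *)
(* group element r_{ik} ... r_{i1} of C^n.  Hence concatenation u ++ v     *)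
(* represents [v][u].  C^n is the quotient of words by the congruence      *)
(* [cox_eq n] generated by r_i r_i = 1 and (r_i r_j)^2 = 1, |i-j| >= 2.    *)

Definition far (n : nat) (i j : 'I_n) : bool := (i.+1 < j) || (j.+1 < i).

Inductive cox_eq (n : nat) : seq 'I_n -> seq 'I_n -> Prop :=
| cox_refl u : cox_eq u u
| cox_sym u v : cox_eq u v -> cox_eq v u
| cox_trans u v w : cox_eq u v -> cox_eq v w -> cox_eq u w
| cox_cat u u' v v' : cox_eq u u' -> cox_eq v v' -> cox_eq (u ++ v) (u' ++ v')
| cox_sq (i : 'I_n) : cox_eq [:: i; i] [::]
| cox_comm (i j : 'I_n) : far i j -> cox_eq [:: i; j; i; j] [::].

(* A group homomorphism C^n -> C^n, presented on representative words:   *)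
(* well defined on classes and multiplicative ([u++v] = [v][u] is sent to *)
(* f[v] f[u], represented by f u ++ f v).                                  *)
Definition cox_hom (n : nat) (f : seq 'I_n -> seq 'I_n) : Prop :=
  (forall u v, cox_eq u v -> cox_eq (f u) (f v)) /\
  (forall u v, cox_eq (f (u ++ v)) (f u ++ f v)).

(* Premaniplexes: a set of flags with, for each colour i, the i-adjacency *)
(* map x |-> x^i (an involution; fixed points = semi-edges allowed).      *)

Definition is_premaniplex (n : nat) (F : Type) (adj : 'I_n -> F -> F) : Prop :=
  (forall i x, adj i (adj i x) = x) /\
  (forall (i j : 'I_n) x, far i j -> adj i (adj j (adj i (adj j x))) = x).

(* Left action of (a word representing) an element of C^n on flags:      *)
(* r_{ik} ... r_{i1} x, applying i1 first.                                *)
Definition act (n : nat) (F : Type) (adj : 'I_n -> F -> F) (w : seq 'I_n) (x : F) : F :=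
  foldl (fun z i => adj i z) x w.

Definition is_automorphism (n : nat) (F : Type) (adj : 'I_n -> F -> F) (t : F -> F) : Prop :=
  bijective t /\ (forall i y, t (adj i y) = adj i (t y)).

Definition premaniplex_iso (n : nat) (F1 F2 : Type)
  (adj1 : 'I_n -> F1 -> F1) (adj2 : 'I_n -> F2 -> F2) (g : F1 -> F2) : Prop :=
  bijective g /\ (forall i x, g (adj1 i x) = adj2 i (g x)).

Definition isomorphic (n : nat) (F1 F2 : Type)
  (adj1 : 'I_n -> F1 -> F1) (adj2 : 'I_n -> F2 -> F2) : Prop :=
  exists g : F1 -> F2, premaniplex_iso adj1 adj2 g.

(* The element W_omega(y) of Pi(Y) is encoded by the pair (y, w) with w a *)
(* word representing omega in C^m; W_u(y) W_v(u y) = W_{[v][u]}(y), i.e.  *)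
(* the pair (y, u ++ v).  A voltage assignment eta : Pi(Y) -> C^n is a    *)
(* map eta y w, well defined on classes, with                             *)
(* eta(W1 W2) = eta(W2) eta(W1), i.e. eta y (u ++ v) = eta y u ++ eta (u y) v *)
(* as words.                                                              *)

Definition is_voltage (n m : nat) (FY : Type) (adjY : 'I_m -> FY -> FY)
  (eta : FY -> seq 'I_m -> seq 'I_n) : Prop :=
  (forall y u v, cox_eq u v -> cox_eq (eta y u) (eta y v)) /\
  (forall y u v, cox_eq (eta y (u ++ v)) (eta y u ++ eta (act adjY u y) v)).

Definition voltage_operator (n m : nat) (FY : Type) (adjY : 'I_m -> FY -> FY)
  (eta : FY -> seq 'I_m -> seq 'I_n) : Prop :=
  is_premaniplex adjY /\ is_voltage adjY eta.

(* X ⋊_eta Y : flags X × Y, (x,y)^i = (eta(W_{r_i}(y)) x, r_i y). *)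
Definition vprod_adj (n m : nat) (FX FY : Type) (adjX : 'I_n -> FX -> FX)
  (adjY : 'I_m -> FY -> FY) (eta : FY -> seq 'I_m -> seq 'I_n)
  (i : 'I_m) (p : FX * FY) : FX * FY :=
  (act adjX (eta p.2 [:: i]) p.1, adjY i p.2).

(* X^{tau#}: same flags, the i-adjacent flag of x is tau#(r_i) x. *)
Definition twist_adj (n : nat) (FX : Type) (adjX : 'I_n -> FX -> FX)
  (f : seq 'I_n -> seq 'I_n) (i : 'I_n) (x : FX) : FX :=
  act adjX (f [:: i]) x.

From mathcomp Require Import all_boot.
Set Implicit Arguments. Unset Strict Implicit. Unset Printing Implicit Defensive.

(* The map (x, y) |-> (x, y tau) is the isomorphism.  On the first coordinate,
   the twisted adjacencies of X^{tau#} act along a word w as tau#(w) acts in X,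
   because tau# is a homomorphism; and tau#(eta(W)) acts as eta(W tau) by the
   compatibility hypothesis, which is exactly the voltage seen from y tau. *)

Lemma act_cat (n : nat) (F : Type) (adj : 'I_n -> F -> F) (u v : seq 'I_n) (x : F) :
  act adj (u ++ v) x = act adj v (act adj u x).
Proof. by rewrite /act foldl_cat. Qed.

Lemma act_cox_eq (n : nat) (F : Type) (adj : 'I_n -> F -> F) :
  is_premaniplex adj -> forall u v, cox_eq u v -> act adj u =1 act adj v.
Proof.
move=> [adjK adj_far] u v; elim=> {u v}.
- by [].
- by move=> u v _ IH x; rewrite IH.
- by move=> u v w _ IHuv _ IHvw x; rewrite IHuv IHvw.
- by move=> u u' v v' _ IHu _ IHv x; rewrite !act_cat IHu IHv.
- by move=> i x; apply: adjK.
- by move=> i j ij_far x; rewrite /act /= adj_far // /far orbC.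
Qed.

Lemma cox_catl (n : nat) (u v v' : seq 'I_n) :
  cox_eq v v' -> cox_eq (u ++ v) (u ++ v').
Proof. by move=> vv'; apply: cox_cat => //; apply: cox_refl. Qed.

Lemma cox_catr (n : nat) (u u' v : seq 'I_n) :
  cox_eq u u' -> cox_eq (u ++ v) (u' ++ v).
Proof. by move=> uu'; apply: cox_cat => //; apply: cox_refl. Qed.

Lemma cox_cat_rev (n : nat) (u : seq 'I_n) : cox_eq (u ++ rev u) [::].
Proof.
elim: u => [|i u IHu]; first exact: cox_refl.
have -> : (i :: u) ++ rev (i :: u) = [:: i] ++ ((u ++ rev u) ++ [:: i]).
  by rewrite rev_cons -cats1 /= catA.
apply: cox_trans (cox_sq i).
exact: cox_catl (cox_catr _ IHu).
Qed.

Lemma cox_idem_nil (n : nat) (t : seq 'I_n) : cox_eq t (t ++ t) -> cox_eq t [::].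
Proof.
move=> t_idem; apply: cox_trans (cox_cat_rev t).
have t_tr : cox_eq t (t ++ (t ++ rev t)).
  by rewrite -{1}[t]cats0; apply/cox_catl/cox_sym/cox_cat_rev.
by apply: cox_trans t_tr _; rewrite catA; apply/cox_catr/cox_sym.
Qed.

Lemma cox_hom_nil (n : nat) (f : seq 'I_n -> seq 'I_n) :
  cox_hom f -> cox_eq (f [::]) [::].
Proof. by case=> _ fM; apply: cox_idem_nil (fM [::] [::]). Qed.

Lemma cox_hom_letters (n : nat) (f : seq 'I_n -> seq 'I_n) :
  cox_hom f -> forall w, cox_eq (f w) (flatten [seq f [:: j] | j <- w]).
Proof.
move=> f_hom; elim=> [|j w IHw] /=; first exact: cox_hom_nil.
apply: cox_trans (f_hom.2 [:: j] w) _.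
exact: cox_catl.
Qed.

Lemma act_twist (n : nat) (F : Type) (adj : 'I_n -> F -> F)
  (f : seq 'I_n -> seq 'I_n) (w : seq 'I_n) :
  act (twist_adj adj f) w =1 act adj (flatten [seq f [:: j] | j <- w]).
Proof. by elim: w => [|j w IHw] x //=; rewrite act_cat -IHw. Qed.

Lemma act_twist_hom (n : nat) (F : Type) (adj : 'I_n -> F -> F)
  (f : seq 'I_n -> seq 'I_n) :
  is_premaniplex adj -> cox_hom f ->
  forall w, act (twist_adj adj f) w =1 act adj (f w).
Proof.
move=> adj_pm f_hom w x; rewrite act_twist.
by apply: act_cox_eq adj_pm _ _ _ x; apply/cox_sym/cox_hom_letters.
Qed.

Theorem theorem6p3 (n m : nat) (FY : Type) (adjY : 'I_m -> FY -> FY)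
  (eta : FY -> seq 'I_m -> seq 'I_n)
  (Hop : voltage_operator adjY eta)
  (tau : FY -> FY) (Htau : is_automorphism adjY tau)
  (tauS : seq 'I_n -> seq 'I_n) (Hhom : cox_hom tauS)
  (Hcompat : forall (y : FY) (w : seq 'I_m), cox_eq (tauS (eta y w)) (eta (tau y) w))
  (FX : Type) (adjX : 'I_n -> FX -> FX) (HX : is_premaniplex adjX) :
  isomorphic (vprod_adj (twist_adj adjX tauS) adjY eta) (vprod_adj adjX adjY eta).
Proof.
case: Htau => [[tau_inv tauK tau_invK] tau_adj].
exists (fun p => (p.1, tau p.2)); split.
  by exists (fun p => (p.1, tau_inv p.2)) => -[x y] /=; rewrite ?tauK ?tau_invK.
move=> i [x y]; rewrite /vprod_adj /= tau_adj act_twist_hom //.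
by rewrite (act_cox_eq HX (Hcompat y [:: i])).
Qed.
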